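(* For all $f,g\in C[0,1]$, $$ \left|\int_0^1 f(x)g(x)\,dx-\int_0^1f(x)\,dx\int_0^1g(x)\,dx\right|\le\frac14\,\widetilde{\omega}\left(f;\frac1{\sqrt3}\right)\widetilde{\omega}\left(g;\frac1{\sqrt3}\right), $$ and if moreover $f',g'\in L_\infty[0,1]$ then the left-hand side is at most $\frac1{12}\|f'\|_{L_\infty}\|g'\|_{L_\infty}$.
   Context: For $f\in C[0,1]$, $\omega(f;t)=\sup\{|f(x)-f(y)|:x,y\in[0,1],|x-y|\le t\}$ is the first-order modulus of continuity, and $\widetilde{\omega}(f;t)=\sup_{0\le x\le t\le y\le1,\,x\ne y}\frac{(t-x)\omega(f,y)+(y-t)\omega(f,x)}{y-x}$ for $0\le t\le1$, $\widetilde{\omega}(f;t)=\omega(f,1)$ for $t>1$ (its least concave majorant). *)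

From HB Require Import structures.
From mathcomp Require Import all_boot all_order all_algebra.
From mathcomp Require Import all_classical all_reals all_analysis.
Set Implicit Arguments. Unset Strict Implicit. Unset Printing Implicit Defensive.
Import Order.TTheory GRing.Theory Num.Theory.
Import numFieldNormedType.Exports.
Local Open Scope classical_set_scope.
Local Open Scope ring_scope.

Definition omega {R : realType} (f : R -> R) (t : R) : R :=
  sup [set r | exists x y : R, [/\ 0 <= x <= 1, 0 <= y <= 1, `|x - y| <= t
                                   & r = `|f x - f y| ] ].

(* its least concave majorant, as defined in the paper *)
Definition omega_tilde {R : realType} (f : R -> R) (t : R) : R :=
  if t <= 1 then
    sup [set r | exists x y : R, [/\ 0 <= x <= t, t <= y <= 1, x != y
             & r = ((t - x) * omega f y + (y - t) * omega f x) / (y - x)] ]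
  else omega f 1.

Definition I01 {R : realType} (f : R -> R) : R :=
  Rintegral (@lebesgue_measure R) (`[0, 1] : set R) f.

(* f' exists in L_infty[0,1] with ||f'||_infty <= M (Sobolev sense W^{1,infty}):
   df is a measurable function, essentially bounded by M on [0,1], and
   f(x) = f(0) + int_0^x df for every x in [0,1]. *)
Definition Linf_deriv_bound {R : realType} (f df : R -> R) (M : R) : Prop :=
  [/\ measurable_fun (`[0, 1] : set R) df,
      {ae (@lebesgue_measure R), forall x, x \in `[0, 1] -> `|df x| <= M}
    & forall x, 0 <= x <= 1 ->
        f x = f 0 + Rintegral (@lebesgue_measure R) (`[0, x] : set R) df].

(* The left-hand side is the covariance [cov f g] of [f] and [g] under the
   uniform distribution on [0, 1], so by Cauchy-Schwarz it suffices to bound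
   the variance [cov f f].  If |f x - f y| <= a + b |x - y| on [0, 1], some
   constant c satisfies |f y - c| <= a/2 + b |y - 1/2|; squaring, bounding the
   cross term by AM-GM and integrating (the mean of (y - 1/2)^2 is 1/12) gives
   cov f f <= ((a + b/sqrt 3)/2)^2.  For continuous f, a supporting line a + b t
   of the concave majorant of omega(f, .) at t = 1/sqrt 3 provides such a and b
   with a + b/sqrt 3 <= omega~(f, 1/sqrt 3); under the derivative bound one can
   take a = 0 and b = ||f'||. *)

From HB Require Import structures.
From mathcomp Require Import all_boot all_order all_algebra.
From mathcomp Require Import all_classical all_reals all_analysis.
From mathcomp Require Import ring lra.
Set Implicit Arguments.
Unset Strict Implicit.
Unset Printing Implicit Defensive.

Import Order.TTheory GRing.Theory Num.Theory.
Import numFieldNormedType.Exports.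
Local Open Scope classical_set_scope.
Local Open Scope ring_scope.

Lemma discriminant_le (R : realFieldType) (X Y Z : R) :
  (forall l m, 0 <= l ^+ 2 * X + 2 * l * m * Z + m ^+ 2 * Y) -> Z ^+ 2 <= X * Y.
Proof.
move=> Q; have X0 : 0 <= X.
  by have := Q 1 0; rewrite expr1n expr0n mulr0 mul0r !mul1r addr0 mul0r addr0.
have [X00|Xn0] := eqVneq X 0.
  by have := Q (- (Y + 1)) (2 * Z); rewrite X00 mulr0 add0r; nra.
have Xgt0 : 0 < X by rewrite lt0r Xn0 X0.
have : 0 <= X * (X * Y - Z ^+ 2).
  by apply: le_trans (Q Z (- X)) _; rewrite le_eqVlt; apply/orP; left; apply/eqP; ring.
by rewrite pmulr_rge0 // subr_ge0.
Qed.

Lemma le_quarter_add_sqr_div (R : realFieldType) (s t : R) :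
  0 < s -> t <= s / 4 + t ^+ 2 / s.
Proof.
move=> s0; rewrite -subr_ge0.
have -> : s / 4 + t ^+ 2 / s - t = (t - s / 2) ^+ 2 / s by field; rewrite lt0r_neq0.
by rewrite divr_ge0 ?sqr_ge0 // ltW.
Qed.

Section InvSqrt3.
Variable R : rcfType.
Local Notation s := ((Num.sqrt 3)^-1 : R).

Lemma inv_sqrt3_gt0 : 0 < s.
Proof. by rewrite invr_gt0 sqrtr_gt0. Qed.

Lemma sqr_inv_sqrt3 : s ^+ 2 = 3^-1.
Proof. by rewrite exprVn sqr_sqrtr. Qed.

Lemma inv_sqrt3_lt1 : s < 1.
Proof. by have := sqr_inv_sqrt3; have := inv_sqrt3_gt0; nra. Qed.

(* [s = 1 / sqrt 3] minimizes [s / 4 + 1 / (12 s)], making the bound a square. *)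
Lemma inv_sqrt3_bound_sqr (a b : R) :
  a ^+ 2 / 4 + a * b * (s / 4 + (12 * s)^-1) + b ^+ 2 / 12 = ((a + b * s) / 2) ^+ 2.
Proof.
have s0 : s != 0 by rewrite lt0r_neq0 ?inv_sqrt3_gt0.
apply/eqP; rewrite -subr_eq0; apply/eqP.
transitivity (b * (a + b * s) * (1 - 3 * s ^+ 2) / (12 * s)); first by field.
by rewrite sqr_inv_sqrt3 mulfV ?subrr ?mulr0 ?mul0r.
Qed.

End InvSqrt3.

(* Right chord slopes at [t] are bounded by left ones; any slope in between works. *)
Lemma supporting_line (R : realType) (phi : R -> R) (t K : R) : 0 < t < 1 ->
  (forall x, 0 <= x <= t -> phi x <= K) ->
  (forall x y, 0 <= x < t -> t < y <= 1 ->
     (t - x) * phi y + (y - t) * phi x <= K * (y - x)) ->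
  exists2 b, 0 <= b & forall s, 0 <= s <= 1 -> phi s <= K + b * (s - t).
Proof.
move=> /andP[t0 t1] phiK chord.
have slope x y : 0 <= x < t -> t < y <= 1 -> (phi y - K) / (y - t) <= (K - phi x) / (t - x).
  move=> /andP[x0 xt] /andP[ty y1].
  rewrite ler_pdivrMr ?subr_gt0 // mulrAC ler_pdivlMr ?subr_gt0 //.
  by have := chord x y; rewrite x0 xt ty y1 => /(_ isT isT); nra.
pose A := [set (phi y - K) / (y - t) | y in `]t, 1]].
have A_ub x : 0 <= x < t -> ubound A ((K - phi x) / (t - x)).
  by move=> hx _ [y + <-]; rewrite /= in_itv /=; exact: slope.
have A_nonempty : A !=set0.
  by exists ((phi 1 - K) / (1 - t)), 1; rewrite //= in_itv /= t1 lexx.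
exists (Num.max 0 (sup A)); first by rewrite le_max lexx.
move=> s /andP[s0 s1]; case: (ltgtP s t) => [st|ts|->].
- have : Num.max 0 (sup A) <= (K - phi s) / (t - s).
    rewrite ge_max divr_ge0 ?subr_ge0 ?phiK ?s0 ?(ltW st) //=.
    by apply: ge_sup => //; apply: A_ub; rewrite s0 st.
  by rewrite ler_pdivlMr ?subr_gt0 //; nra.
- have : (phi s - K) / (s - t) <= Num.max 0 (sup A).
    rewrite le_max; apply/orP; right; apply: ub_le_sup.
      by exists ((K - phi 0) / (t - 0)); apply: A_ub; rewrite lexx t0.
    by exists s; rewrite //= in_itv /= ts s1.
  by rewrite ler_pdivrMr ?subr_gt0 //; nra.
- by rewrite subrr mulr0 addr0 phiK ?lexx ?(ltW t0).
Qed.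

Local Notation C01 f := {within `[0, 1%R], continuous f}.

Section ContinuityOnUnitInterval.
Variable R : realType.

Lemma cont01D (f g : R -> R) : C01 f -> C01 g -> C01 (fun x => f x + g x).
Proof. by move=> cf cg x; apply: continuousD; [exact: cf|exact: cg]. Qed.

Lemma cont01M (f g : R -> R) : C01 f -> C01 g -> C01 (fun x => f x * g x).
Proof. by move=> cf cg x; apply: continuousM; [exact: cf|exact: cg]. Qed.

Lemma cont01_cst (c : R) : C01 (fun _ : R => c).
Proof. by apply: continuous_subspaceT => x; exact: cst_continuous. Qed.

Lemma cont01_id : C01 (fun x : R => x).
Proof. by apply: continuous_subspaceT => x; exact: cvg_id. Qed.

Lemma cont01X (f : R -> R) (n : nat) : C01 f -> C01 (fun x => f x ^+ n).
Proof.
move=> cf; elim: n => [|n IH]; first exact: cont01_cst.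
have -> : (fun x => f x ^+ n.+1) = (fun x => f x * f x ^+ n).
  by apply: funext => x; rewrite exprS.
exact: cont01M.
Qed.

End ContinuityOnUnitInterval.

#[local] Hint Resolve cont01D cont01M cont01X cont01_cst cont01_id : core.

Section IntegralOnUnitInterval.
Variable R : realType.

Lemma integrable01 (f : R -> R) :
  C01 f -> lebesgue_measure.-integrable `[0, 1] (EFin \o f).
Proof. by move=> cf; apply: continuous_compact_integrable => //; exact: segment_compact. Qed.

Lemma I01_cst (c : R) : I01 (fun=> c) = c.
Proof. by rewrite /I01 Rintegral_cst //= lebesgue_measure_itv /= ifT ?ltr01 //= subr0 mulr1. Qed.

Lemma I01D (f g : R -> R) : C01 f -> C01 g -> I01 (fun x => f x + g x) = I01 f + I01 g.
Proof. by move=> cf cg; rewrite /I01 RintegralD //; exact: integrable01. Qed.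

Lemma I01Z (k : R) (f : R -> R) : C01 f -> I01 (fun x => k * f x) = k * I01 f.
Proof. by move=> cf; rewrite /I01 RintegralZl //; exact: integrable01. Qed.

Lemma eq_I01 (f g : R -> R) : (forall x, 0 <= x <= 1 -> f x = g x) -> I01 f = I01 g.
Proof. by move=> fg; apply: eq_Rintegral => x; rewrite inE /= in_itv; exact: fg. Qed.

Lemma le_I01 (f g : R -> R) : C01 f -> C01 g ->
  (forall x, 0 <= x <= 1 -> f x <= g x) -> I01 f <= I01 g.
Proof. by move=> cf cg fg; apply: le_Rintegral => //; exact: integrable01. Qed.

Lemma I01_sqr_centered : I01 (fun x : R => (x - 2^-1) ^+ 2) = 12^-1.
Proof.
have conem n : C01 (fun x : R => unstable.onem x ^+ n).
  by apply: continuous_subspaceT => x; exact: continuous_onemXn.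
rewrite (@eq_I01 _ (fun x => unstable.onem x ^+ 2 + (-1 * unstable.onem x ^+ 1 + 4^-1)));
  last by move=> x _; rewrite /unstable.onem; field.
rewrite !I01D ?I01Z ?I01_cst; auto.
by rewrite /I01 !Rintegral_onemXn; field.
Qed.

Definition cov (f g : R -> R) := I01 (fun x => f x * g x) - I01 f * I01 g.

Lemma I01_sqr_dev (c : R) (f : R -> R) : C01 f ->
  I01 (fun x => (f x - c) ^+ 2) = cov f f + (I01 f - c) ^+ 2.
Proof.
move=> cf; rewrite (@eq_I01 _ (fun x => f x * f x + (-2 * c * f x + c ^+ 2)));
  last by move=> x _; ring.
by rewrite !I01D ?I01Z ?I01_cst /cov; auto; ring.
Qed.

Lemma cov_le_sqr_dev (c : R) (f : R -> R) : C01 f ->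
  cov f f <= I01 (fun x => (f x - c) ^+ 2).
Proof. by move=> cf; rewrite I01_sqr_dev // lerDl sqr_ge0. Qed.

Lemma cov_ge0 (f : R -> R) : C01 f -> 0 <= cov f f.
Proof.
move=> cf; have := I01_sqr_dev (I01 f) cf; rewrite subrr expr0n addr0 => <-.
rewrite -[leLHS](I01_cst 0); apply: le_I01; auto => x _; exact: sqr_ge0.
Qed.

Lemma cov_linear_comb (f g : R -> R) (l m : R) : C01 f -> C01 g ->
  cov (fun x => l * f x + m * g x) (fun x => l * f x + m * g x)
  = l ^+ 2 * cov f f + 2 * l * m * cov f g + m ^+ 2 * cov g g.
Proof.
move=> cf cg; rewrite /cov (@eq_I01 _ (fun x => l ^+ 2 * (f x * f x)
  + (2 * l * m * (f x * g x) + m ^+ 2 * (g x * g x)))); last by move=> x _; ring.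
by rewrite !I01D ?I01Z; auto; ring.
Qed.

Lemma cov_CauchySchwarz (f g : R -> R) : C01 f -> C01 g ->
  cov f g ^+ 2 <= cov f f * cov g g.
Proof.
move=> cf cg; apply: discriminant_le => l m.
by rewrite -(cov_linear_comb l m cf cg); apply: cov_ge0; auto.
Qed.

Lemma norm_cov_le (f g : R -> R) (p q : R) : C01 f -> C01 g -> 0 <= p -> 0 <= q ->
  cov f f <= p ^+ 2 -> cov g g <= q ^+ 2 -> `|cov f g| <= p * q.
Proof.
move=> cf cg p0 q0 fp gq; rewrite -ler_sqr ?nnegrE ?mulr_ge0 // real_normK ?num_real //.
apply: le_trans (cov_CauchySchwarz cf cg) _; rewrite exprMn.
by apply: ler_pM => //; exact: cov_ge0.
Qed.

End IntegralOnUnitInterval.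

Definition affine_modulus (R : realType) (f : R -> R) (a b : R) :=
  forall x y, 0 <= x <= 1 -> 0 <= y <= 1 -> `|f x - f y| <= a + b * `|x - y|.

Lemma exists_affine_center (R : realType) (f : R -> R) (a b z : R) :
  0 <= b -> affine_modulus f a b ->
  exists c, forall y, 0 <= y <= 1 -> `|f y - c| <= a / 2 + b * `|y - z|.
Proof.
move=> b0 fab.
pose S := [set f x - a / 2 - b * `|x - z| | x in `[0, 1]].
have S_ub y : 0 <= y <= 1 -> ubound S (f y + a / 2 + b * `|y - z|).
  move=> y01 r [x x01 <-]; rewrite /= in_itv /= in x01.
  have := fab x y x01 y01; have := ler_norm (f x - f y).
  have : b * `|x - y| <= b * (`|x - z| + `|y - z|).
    by rewrite ler_wpM2l // (distrC y); exact: ler_distD.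
  lra.
exists (sup S) => y y01; rewrite ler_norml; apply/andP; split.
  suff : sup S <= f y + a / 2 + b * `|y - z| by lra.
  apply: ge_sup; last exact: S_ub.
  by exists (f 0 - a / 2 - b * `|0 - z|), 0; rewrite //= in_itv /= lexx ler01.
suff : f y - a / 2 - b * `|y - z| <= sup S by lra.
apply: ub_le_sup; last by exists y; rewrite //= in_itv.
by exists (f 0 + a / 2 + b * `|0 - z|); apply: S_ub; rewrite lexx ler01.
Qed.

Section VarianceBound.
Variable R : realType.

Lemma cov_le_affine_modulus (f : R -> R) (a b s : R) : C01 f ->
  0 <= a -> 0 <= b -> 0 < s -> affine_modulus f a b ->
  cov f f <= a ^+ 2 / 4 + a * b * (s / 4 + (12 * s)^-1) + b ^+ 2 / 12.
Proof.
move=> cf a0 b0 s0 fab; have [c fc] := exists_affine_center 2^-1 b0 fab.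
apply: le_trans (cov_le_sqr_dev c cf) _.
have -> : a ^+ 2 / 4 + a * b * (s / 4 + (12 * s)^-1) + b ^+ 2 / 12 =
    I01 (fun y => a ^+ 2 / 4 + a * b * s / 4 + (a * b / s + b ^+ 2) * (y - 2^-1) ^+ 2).
  rewrite I01D ?I01Z ?I01_sqr_centered ?I01_cst; auto.
  by field; rewrite lt0r_neq0.
apply: le_I01; auto => y y01.
have t0 := normr_ge0 (y - 2^-1).
have -> : (y - 2^-1) ^+ 2 = `|y - 2^-1| ^+ 2 by rewrite real_normK ?num_real.
have : (f y - c) ^+ 2 <= (a / 2 + b * `|y - 2^-1|) ^+ 2.
  rewrite -real_normK ?num_real // ler_pXn2r ?nnegrE ?fc //.
  by rewrite addr_ge0 ?mulr_ge0 ?divr_ge0.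
have : a * b * `|y - 2^-1| <= a * b * (s / 4 + `|y - 2^-1| ^+ 2 / s).
  by rewrite ler_wpM2l ?mulr_ge0 ?le_quarter_add_sqr_div.
have -> : a * b * (s / 4 + `|y - 2^-1| ^+ 2 / s) =
  a * b * s / 4 + a * b / s * `|y - 2^-1| ^+ 2 by field; rewrite lt0r_neq0.
nra.
Qed.

Lemma cov_le_affine_modulus_sqrt3 (f : R -> R) (a b : R) : C01 f ->
  0 <= a -> 0 <= b -> affine_modulus f a b ->
  cov f f <= ((a + b * (Num.sqrt 3)^-1) / 2) ^+ 2.
Proof.
move=> cf a0 b0 fab; rewrite -inv_sqrt3_bound_sqr.
exact: cov_le_affine_modulus (inv_sqrt3_gt0 R) fab.
Qed.

Lemma norm_cov_le_affine_moduli (f g : R -> R) (a b c d : R) : C01 f -> C01 g ->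
  0 <= a -> 0 <= b -> 0 <= c -> 0 <= d -> affine_modulus f a b -> affine_modulus g c d ->
  `|cov f g| <= (a + b * (Num.sqrt 3)^-1) / 2 * ((c + d * (Num.sqrt 3)^-1) / 2).
Proof.
move=> cf cg a0 b0 c0 d0 fab gcd; have s0 := ltW (inv_sqrt3_gt0 R).
by apply: norm_cov_le cf cg _ _ (cov_le_affine_modulus_sqrt3 cf a0 b0 fab)
  (cov_le_affine_modulus_sqrt3 cg c0 d0 gcd); rewrite divr_ge0 // addr_ge0 // mulr_ge0.
Qed.

End VarianceBound.

Section Modulus.
Variables (R : realType) (f : R -> R).
Hypothesis cf : {within `[0, 1%R], continuous f}.

Let omega_set (t : R) := [set r | exists x y : R, [/\ 0 <= x <= 1, 0 <= y <= 1, `|x - y| <= t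
                                    & r = `|f x - f y| ] ].

Lemma omega_set_has_ubound t : has_ubound (omega_set t).
Proof.
have [xmax _ fmax] := EVT_max ler01 cf; have [xmin _ fmin] := EVT_min ler01 cf.
exists (f xmax - f xmin) => _ [x [y [x01 y01 _ ->]]].
have := fmax x; have := fmax y; have := fmin x; have := fmin y.
rewrite !in_itv /= x01 y01 => /(_ isT) ? /(_ isT) ? /(_ isT) ? /(_ isT) ?.
by rewrite ler_norml; apply/andP; split; lra.
Qed.

Lemma le_omega t x y : 0 <= x <= 1 -> 0 <= y <= 1 -> `|x - y| <= t ->
  `|f x - f y| <= omega f t.
Proof. by move=> x01 y01 xyt; apply: ub_le_sup; [exact: omega_set_has_ubound|exists x, y]. Qed.

Lemma omega_ge0 t : 0 <= t -> 0 <= omega f t.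
Proof. by move=> t0; have := @le_omega t 0 0; rewrite !subrr !normr0 lexx ler01; apply. Qed.

Lemma omega_nondecreasing s t : 0 <= s -> s <= t -> omega f s <= omega f t.
Proof.
move=> s0 st; apply: ge_sup; first by exists 0, 0, 0; rewrite !subrr normr0 lexx ler01.
by move=> _ [x [y [x01 y01 xys ->]]]; apply: le_omega => //; exact: le_trans st.
Qed.

Lemma omega_tilde_chord t x y : 0 <= x <= t -> t <= y <= 1 -> x < y ->
  (t - x) * omega f y + (y - t) * omega f x <= omega_tilde f t * (y - x).
Proof.
move=> /andP[x0 xt] /andP[ty y1] xy; have t1 : t <= 1 by exact: le_trans y1.
rewrite -ler_pdivrMr ?subr_gt0 // /omega_tilde t1.
apply: ub_le_sup; last by exists x, y; rewrite x0 xt ty y1 lt_eqF.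
exists (omega f 1) => _ [x' [y' [/andP[x'0 x't] /andP[ty' y'1] x'y' ->]]].
have x'y'_lt : x' < y' by rewrite lt_neqAle x'y' (le_trans x't ty').
rewrite ler_pdivrMr ?subr_gt0 //.
have : (t - x') * omega f y' <= (t - x') * omega f 1.
  by rewrite ler_wpM2l ?subr_ge0 // omega_nondecreasing // (le_trans x'0 (ltW x'y'_lt)).
have : (y' - t) * omega f x' <= (y' - t) * omega f 1.
  by rewrite ler_wpM2l ?subr_ge0 // omega_nondecreasing // (le_trans x't t1).
lra.
Qed.

Lemma omega_le_omega_tilde t : 0 <= t < 1 -> omega f t <= omega_tilde f t.
Proof.
move=> /andP[t0 t1]; have := @omega_tilde_chord t t 1.
rewrite subrr mul0r add0r mulrC ler_pM2r ?subr_gt0 //; apply; by rewrite ?t0 ?lexx ?ltW.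
Qed.

Lemma omega_tilde_affine_majorant t : 0 < t < 1 ->
  exists a b, [/\ 0 <= a, 0 <= b, a + b * t <= omega_tilde f t & affine_modulus f a b].
Proof.
move=> /andP[t0 t1]; set K := omega_tilde f t.
have [b b0 omega_le] : exists2 b, 0 <= b &
    forall s, 0 <= s <= 1 -> omega f s <= K + b * (s - t).
  apply: supporting_line; first by rewrite t0 t1.
    move=> x /andP[x0 xt]; apply: le_trans (omega_nondecreasing x0 xt) _.
    by apply: omega_le_omega_tilde; rewrite (ltW t0) t1.
  move=> x y /andP[x0 xt] /andP[ty y1].
  by apply: omega_tilde_chord; rewrite ?x0 ?y1 ?(ltW xt) ?(ltW ty) ?(lt_trans xt ty).
exists (K - b * t), b; split => //.
- by have := omega_le 0; have := omega_ge0 (lexx 0); rewrite lexx ler01; lra.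
- by rewrite subrK.
- move=> x y x01 y01; have xy01 : 0 <= `|x - y| <= 1.
    by move: x01 y01 => /andP[? ?] /andP[? ?]; rewrite normr_ge0 ler_norml; lra.
  have := le_omega x01 y01 (lexx _); have := omega_le _ xy01; lra.
Qed.

End Modulus.

Section DerivativeBound.
Variable R : realType.
Local Notation mu := (@lebesgue_measure R).

Lemma ae_bound_ge0 (h : R -> R) (M : R) :
  {ae mu, forall x, x \in `[0, 1] -> `|h x| <= M} -> 0 <= M.
Proof.
move=> hM; rewrite leNgt; apply/negP => M0.
have : (\int[mu]_(x in `[0%R, 1%R]) (cst 1%:E) x <= \int[mu]_(x in `[0%R, 1%R]) (cst 0%:E) x)%E.
  apply: ae_ge0_le_integral => //.
  apply: (@filterS _ _ (ae_filter_ringOfSetsType mu) _ _ _ hM) => x hx x01.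
  by exfalso; have := hx x01; have := normr_ge0 (h x); lra.
rewrite !integral_cst // mul1e mul0e /= lebesgue_measure_itv /= ifT ?ltr01 //.
by rewrite oppr0 adde0 lee_fin ler10.
Qed.

Lemma integral_norm_le_ae_bound (h : R -> R) (M : R) (D : set R) :
  measurable D -> D `<=` `[0, 1] -> measurable_fun D h ->
  {ae mu, forall x, x \in `[0, 1] -> `|h x| <= M} ->
  (\int[mu]_(x in D) (`|h x|)%:E <= M%:E * mu D)%E.
Proof.
move=> mD D01 mh hM; rewrite -integral_cst //; apply: ae_ge0_le_integral => //.
  by apply/measurable_realfun.measurable_EFinP; exact: measurableT_comp.
  by move=> x _; rewrite lee_fin (ae_bound_ge0 hM).
apply: (@filterS _ _ (ae_filter_ringOfSetsType mu) _ _ _ hM) => x hx Dx.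
by rewrite /= lee_fin hx // inE; exact: D01.
Qed.

Lemma integrable01_ae_bounded (h : R -> R) (M : R) :
  measurable_fun (`[0, 1] : set R) h -> {ae mu, forall x, x \in `[0, 1] -> `|h x| <= M} ->
  mu.-integrable (`[0, 1] : set R) (EFin \o h).
Proof.
move=> mh hM; apply/integrableP; split; first exact/measurable_realfun.measurable_EFinP.
apply: le_lt_trans (integral_norm_le_ae_bound _ _ mh hM) _ => //.
by rewrite lebesgue_measure_itv /= ifT ?ltr01 // oppr0 adde0 mule1 ltry.
Qed.

Lemma Linf_deriv_bound_ge0 (f df : R -> R) (M : R) : Linf_deriv_bound f df M -> 0 <= M.
Proof. by case=> _ hM _; exact: ae_bound_ge0 hM. Qed.

Lemma Linf_deriv_bound_sub_integral (f df : R -> R) (M : R) (x y : R) :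
  Linf_deriv_bound f df M -> 0 <= y -> y <= x -> x <= 1 ->
  f x - f y = \int[mu]_(t in `]y, x]) df t.
Proof.
case=> mdf hM hf y0 yx x1; have x0 := le_trans y0 yx.
have ix : mu.-integrable `[0, x] (EFin \o df).
  apply: integrableS (integrable01_ae_bounded mdf hM) => //.
  by apply: subset_itvl; rewrite bnd_simp.
have := @Rintegral_itvB R df (BLeft 0) (BRight x) y ix.
rewrite !bnd_simp y0 yx => /(_ isT isT) <-.
by rewrite (hf x) ?x0 // (hf y) ?y0 ?(le_trans yx x1) //; ring.
Qed.

Lemma Linf_deriv_bound_dist_le (f df : R -> R) (M : R) (x y : R) :
  Linf_deriv_bound f df M -> 0 <= y -> y <= x -> x <= 1 ->
  `|f x - f y| <= M * (x - y).
Proof.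
move=> hf y0 yx x1; have M0 := Linf_deriv_bound_ge0 hf; have [mdf hM _] := hf.
rewrite (Linf_deriv_bound_sub_integral hf y0 yx x1).
have yx01 : `]y, x] `<=` `[0%R, 1%R] by apply: subset_itv; rewrite bnd_simp.
have iyx : mu.-integrable `]y, x] (EFin \o df).
  by apply: integrableS (integrable01_ae_bounded mdf hM).
apply: le_trans (le_normr_Rintegral _ iyx) _ => //.
have : (\int[mu]_(t in `]y, x]) (`|df t|)%:E <= (M * (x - y))%:E)%E.
  have mdf' := measurable_funS (measurable_itv _) yx01 mdf.
  have := integral_norm_le_ae_bound (measurable_itv _) yx01 mdf' hM.
  rewrite lebesgue_measure_itv /= lte_fin; case: ifP => _ h; apply: le_trans h _.
    by rewrite -EFinD -EFinM.
  by rewrite mule0 lee_fin mulr_ge0 ?subr_ge0.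
have i0 : (0 <= \int[mu]_(t in `]y, x]) (`|df t|)%:E)%E.
  by apply: integral_ge0 => t _; rewrite lee_fin.
move=> h; rewrite /Rintegral -[leRHS]/(fine (M * (x - y))%:E).
by apply: fine_le => //; rewrite ge0_fin_numE //; apply: le_lt_trans h (ltry _).
Qed.

Lemma Linf_deriv_bound_affine_modulus (f df : R -> R) (M : R) :
  Linf_deriv_bound f df M -> affine_modulus f 0 M.
Proof.
move=> hf x y /andP[x0 x1] /andP[y0 y1]; rewrite add0r; have [yx|/ltW xy] := leP y x.
  by rewrite [`|x - y|]ger0_norm ?subr_ge0 //; exact: Linf_deriv_bound_dist_le hf y0 yx x1.
rewrite distrC (distrC x) [`|y - x|]ger0_norm ?subr_ge0 //.
exact: Linf_deriv_bound_dist_le hf x0 xy y1.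
Qed.

End DerivativeBound.

Theorem mainTheorem8 (R : realType) (f g : R -> R) :
  {within `[0, 1], continuous f} -> {within `[0, 1], continuous g} ->
  `|I01 (fun x => f x * g x) - I01 f * I01 g|
     <= 4^-1 * omega_tilde f (Num.sqrt 3)^-1 * omega_tilde g (Num.sqrt 3)^-1
  /\
  (forall (df dg : R -> R) (Mf Mg : R),
     Linf_deriv_bound f df Mf -> Linf_deriv_bound g dg Mg ->
     `|I01 (fun x => f x * g x) - I01 f * I01 g| <= 12^-1 * Mf * Mg).
Proof.
move=> cf cg; set s := (Num.sqrt 3)^-1 : R; split.
  have s01 : 0 < s < 1 by rewrite inv_sqrt3_gt0 inv_sqrt3_lt1.
  have [a [b [a0 b0 abf fab]]] := omega_tilde_affine_majorant cf s01.
  have [c [d [c0 d0 cdg gcd]]] := omega_tilde_affine_majorant cg s01.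
  apply: le_trans (norm_cov_le_affine_moduli cf cg a0 b0 c0 d0 fab gcd) _.
  rewrite (_ : 4^-1 * _ * _ = omega_tilde f s / 2 * (omega_tilde g s / 2)); last by field.
  have bs0 : 0 <= b * s := mulr_ge0 b0 (ltW (inv_sqrt3_gt0 R)).
  have ds0 : 0 <= d * s := mulr_ge0 d0 (ltW (inv_sqrt3_gt0 R)).
  by rewrite -/s; apply: ler_pM; lra.
move=> df dg Mf Mg hf hg.
have Mf0 := Linf_deriv_bound_ge0 hf; have Mg0 := Linf_deriv_bound_ge0 hg.
apply: le_trans (norm_cov_le_affine_moduli cf cg (lexx 0) Mf0 (lexx 0) Mg0
  (Linf_deriv_bound_affine_modulus hf) (Linf_deriv_bound_affine_modulus hg)) _.
have s2 : s ^+ 2 = 3^-1 := sqr_inv_sqrt3 R.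
rewrite [leRHS](_ : _ = Mf * s / 2 * (Mg * s / 2)) ?add0r //.
by transitivity (Mf * Mg * s ^+ 2 / 4); [rewrite s2; field|field].
Qed.
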